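(* For every integer $n\ge 2$, $$C_n=\frac{n+2}{2(n-1)\pi}\int_0^{\infty}\frac{t^2}{\left(t^2+\frac14\right)^{5/2}}\left[\left(2+\frac{1}{\sqrt{t^2+\frac14}}\right)^{n-1}-\left(2-\frac{1}{\sqrt{t^2+\frac14}}\right)^{n-1}\right]\mathrm{d}t .$$
   Context: $C_n=\frac{1}{n+1}\binom{2n}{n}$ denotes the $n$-th Catalan number ($n\ge 0$). *)

From Stdlib Require Import Reals.
From Coquelicot Require Import Coquelicot.
Open Scope R_scope.

Definition catalan (n : nat) : R := / INR (n + 1) * Binomial.C (2 * n) n.

Definition integrand (n : nat) (t : R) : R :=
  let s := t ^ 2 + / 4 in
  t ^ 2 / Rpower s (5 / 2) *
  ((2 + / sqrt s) ^ (n - 1) - (2 - / sqrt s) ^ (n - 1)).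

(* Substitute t = tan (2 a) / 2, so that a runs over [0, PI/4) and
   2 +- 1 / sqrt (t^2 + 1/4) = 4 cos^2 a, 4 sin^2 a.  With
   Q X = X^n (1 - X) (2 X - 1) the integrand becomes 2^(2n+3) (Q (cos^2 a) + Q (sin^2 a)) da,
   and reflecting a to PI/2 - a turns this into 2^(2n+3) times the integral of Q (cos^2 x)
   over [0, PI/2].  Expanding Q = -2 X^(n+2) + 3 X^(n+1) - X^n, Wallis' integrals
   int_0^(PI/2) cos^(2k) = PI/2 * binom(2k, k) / 4^k give 2 PI (n - 1) / (n + 2) * C_n. *)

From Stdlib Require Import Reals Lia Lra.
From Coquelicot Require Import Coquelicot.
Open Scope R_scope.

(* Primitive of cos^(2k) vanishing at 0, built from the reduction formula. *)
Fixpoint wallis_prim (k : nat) (x : R) : R :=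
  match k with
  | O => x
  | S k => cos x ^ (2 * k + 1) * sin x / (2 * INR k + 2)
           + (2 * INR k + 1) / (2 * INR k + 2) * wallis_prim k x
  end.

Lemma is_derive_wallis_prim k x : is_derive (wallis_prim k) x ((cos x ^ 2) ^ k).
Proof.
induction k as [|k IH]; simpl wallis_prim.
- auto_derive; [easy | ring].
- assert (HD : Derive (wallis_prim k) x = (cos x ^ 2) ^ k) by now apply is_derive_unique.
  assert (Hk : 0 <= INR k) by apply pos_INR.
  assert (Hsin : sin x * sin x = 1 - cos x ^ 2).
  { pose proof (sin2_cos2 x) as E; unfold Rsqr in E; lra. }
  auto_derive; [now exists ((cos x ^ 2) ^ k) |].
  change (fun y => wallis_prim k y) with (wallis_prim k); rewrite HD.
  replace (Init.Nat.pred (k + (k + 0) + 1)) with (2 * k)%nat by lia.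
  replace (k + (k + 0) + 1)%nat with (S (2 * k)) by lia.
  rewrite S_INR, mult_INR, <- tech_pow_Rmult, pow_mult.
  transitivity ((- (sin x * sin x) * (2 * INR k + 1) + cos x ^ 2) * (cos x ^ 2) ^ k
                / (2 * INR k + 2) + (2 * INR k + 1) / (2 * INR k + 2) * (cos x ^ 2) ^ k).
  + simpl INR; field; lra.
  + rewrite Hsin; simpl pow; field; lra.
Qed.

Lemma wallis_prim_0 k : wallis_prim k 0 = 0.
Proof.
induction k as [|k IH]; simpl wallis_prim; [easy |].
rewrite IH, sin_0; pose proof (pos_INR k); field; lra.
Qed.

Lemma central_binom_S k :
  Binomial.C (2 * S k) (S k) = Binomial.C (2 * k) k * 2 * (2 * INR k + 1) / (INR k + 1).
Proof.
unfold Binomial.C.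
replace (2 * S k - S k)%nat with (S k) by lia.
replace (2 * k - k)%nat with k by lia.
replace (2 * S k)%nat with (S (S (2 * k))) by lia.
rewrite !fact_simpl, !mult_INR, !S_INR, mult_INR.
pose proof (INR_fact_neq_0 k); pose proof (INR_fact_neq_0 (2 * k)); pose proof (pos_INR k).
simpl INR; field; repeat split; lra.
Qed.

Lemma wallis_prim_S_PI2 k :
  wallis_prim (S k) (PI / 2) = (2 * INR k + 1) / (2 * INR k + 2) * wallis_prim k (PI / 2).
Proof.
simpl wallis_prim; rewrite cos_PI2, pow_i by lia.
pose proof (pos_INR k); field; lra.
Qed.

Lemma wallis_prim_PI2 k : wallis_prim k (PI / 2) = PI / 2 * Binomial.C (2 * k) k / 4 ^ k.
Proof.
induction k as [|k IH].
- unfold Binomial.C; simpl; field.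
- rewrite wallis_prim_S_PI2, IH, central_binom_S; simpl pow.
  pose proof (pos_INR k); assert (4 ^ k <> 0) by (apply pow_nonzero; lra).
  field; repeat split; lra.
Qed.

Lemma atan_lim_p_infty : filterlim atan (Rbar_locally p_infty) (locally (PI / 2)).
Proof.
intros P [eps HP]; pose proof PI_RGT_0.
set (d := Rmin eps (PI / 4)).
assert (Hd : 0 < d) by (apply Rmin_pos; [apply cond_pos | lra]).
assert (Hde : d <= eps) by apply Rmin_l.
assert (HdPI : d <= PI / 4) by apply Rmin_r.
exists (tan (PI / 2 - d)); intros x Hx; apply HP.
assert (PI / 2 - d < atan x).
{ rewrite <- (atan_tan (PI / 2 - d)) by lra; now apply atan_increasing. }
pose proof (atan_bound x).
unfold ball; simpl; unfold AbsRing_ball, abs, minus, plus, opp; simpl.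
apply Rabs_def1; lra.
Qed.

Lemma cos_half_atan_sqr u : cos (atan u / 2) ^ 2 = (1 + / sqrt (1 + u ^ 2)) / 2.
Proof.
assert (Hc : cos (atan u) = / sqrt (1 + u ^ 2))
  by (rewrite cos_atan; unfold Rsqr; simpl; rewrite Rmult_1_r; field;
      apply Rgt_not_eq, sqrt_lt_R0; nra).
rewrite <- Hc.
replace (atan u) with (2 * (atan u / 2)) at 2 by field.
rewrite cos_2a_cos; field.
Qed.

Lemma sin_half_atan_sqr u : sin (atan u / 2) ^ 2 = (1 - / sqrt (1 + u ^ 2)) / 2.
Proof.
pose proof (sin2_cos2 (atan u / 2)) as E; unfold Rsqr in E.
pose proof (cos_half_atan_sqr u); simpl in *; lra.
Qed.

Definition subst_angle (t : R) : R := atan (2 * t) / 2.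

Lemma is_derive_subst_angle t : is_derive subst_angle t (/ (1 + (2 * t) ^ 2)).
Proof. unfold subst_angle; auto_derive; [easy | unfold Rsqr; field; nra]. Qed.

Lemma subst_angle_lim : filterlim subst_angle (Rbar_locally p_infty) (locally (PI / 4)).
Proof.
apply (filterlim_comp _ _ _ (fun t => atan (2 * t)) (fun a => a / 2) _ (locally (PI / 2))).
- apply (filterlim_comp _ _ _ (fun t => 2 * t) atan _ (Rbar_locally p_infty));
    [| apply atan_lim_p_infty].
  intros P [M HM]; exists (M / 2); intros x Hx; apply HM; lra.
- replace (PI / 4) with (PI / 2 / 2) by field.
  apply (continuous_mult (fun a => a) (fun _ => / 2)).
  + apply continuous_id.
  + apply continuous_const.
Qed.

Section Symmetrization.

Variables (A Q : R -> R).
Hypothesis A_deriv : forall x, is_derive A x (Q (cos x ^ 2)).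
Hypothesis Q_cont : forall X, continuous Q X.

Definition sym_integrand (t : R) : R :=
  (Q (cos (subst_angle t) ^ 2) + Q (sin (subst_angle t) ^ 2)) / (1 + (2 * t) ^ 2).

Let sym_prim (t : R) : R := A (subst_angle t) - A (PI / 2 - subst_angle t).

Let is_derive_sym_prim t : is_derive sym_prim t (sym_integrand t).
Proof.
assert (E : forall y, Derive A y = Q (cos y ^ 2)) by (intro; now apply is_derive_unique).
unfold sym_prim, sym_integrand.
assert (EA : forall y, ex_derive A y) by (intro; eexists; apply A_deriv).
assert (ES : forall y, ex_derive subst_angle y) by (intro; eexists; apply is_derive_subst_angle).
auto_derive.
- repeat split; auto.
- change (fun y => subst_angle y) with subst_angle; change (fun y => A y) with A.
  rewrite !E, (is_derive_unique _ _ _ (is_derive_subst_angle t)).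
  replace (PI / 2 + - subst_angle t) with (PI / 2 - subst_angle t) by ring.
  rewrite cos_shift; field; nra.
Qed.

Let sym_integrand_cont t : continuous sym_integrand t.
Proof.
assert (HQ : forall f : R -> R, continuous f (subst_angle t) ->
          continuous (fun s => Q (f (subst_angle s) ^ 2)) t).
{ intros f Hf; apply (continuous_comp (fun s => f (subst_angle s) ^ 2)); [| apply Q_cont].
  apply (continuous_comp (fun s => f (subst_angle s)) (fun y => y ^ 2)).
  - apply (continuous_comp subst_angle f); [| exact Hf].
    apply (ex_derive_continuous subst_angle); eexists; apply is_derive_subst_angle.
  - apply (ex_derive_continuous (fun y => y ^ 2)); auto_derive; easy. }
apply (continuous_mult (fun s => _ + _) (fun s => / (1 + (2 * s) ^ 2))).
- apply (continuous_plus (fun s => Q (cos (subst_angle s) ^ 2))); apply HQ;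
    [apply continuous_cos | apply continuous_sin].
- apply (ex_derive_continuous (fun s => / (1 + (2 * s) ^ 2))); auto_derive; nra.
Qed.

Let sym_prim_lim : filterlim sym_prim (Rbar_locally p_infty) (locally 0).
Proof.
set (G a := A a - A (PI / 2 - a)).
replace 0 with (G (PI / 4)) by (unfold G; replace (PI / 2 - PI / 4) with (PI / 4) by field; ring).
apply (filterlim_comp _ _ _ subst_angle G _ (locally (PI / 4))); [apply subst_angle_lim |].
apply (ex_derive_continuous G); unfold G; auto_derive.
repeat split; eexists; apply A_deriv.
Qed.

(* Mirroring a in [0, PI/4) to PI/2 - a recovers the integral of Q (cos x ^ 2) over [0, PI/2]. *)
Lemma is_RInt_gen_sym_integrand :
  is_RInt_gen sym_integrand (at_point 0) (Rbar_locally p_infty) (A (PI / 2) - A 0).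
Proof.
replace (A (PI / 2) - A 0) with (0 - sym_prim 0)
  by (unfold sym_prim, subst_angle; rewrite Rmult_0_r, atan_0, Rdiv_0_l, Rminus_0_r; ring).
apply (is_RInt_gen_ext (Derive sym_prim)).
- apply filter_forall; intros ab x _; now apply is_derive_unique.
- apply is_RInt_gen_Derive.
  + apply filter_forall; intros ab x _; eexists; apply is_derive_sym_prim.
  + apply filter_forall; intros ab x _.
    apply (continuous_ext sym_integrand); [| apply sym_integrand_cont].
    intro y; symmetry; now apply is_derive_unique.
  + intros P HP; unfold filtermap, at_point; now apply locally_singleton.
  + apply sym_prim_lim.
Qed.

End Symmetrization.

Definition catalan_poly (n : nat) (X : R) : R := X ^ n * (1 - X) * (2 * X - 1).

Definition catalan_prim (n : nat) (x : R) : R :=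
  - 2 * wallis_prim (n + 2) x + 3 * wallis_prim (n + 1) x - wallis_prim n x.

Lemma is_derive_catalan_prim n x :
  is_derive (catalan_prim n) x (catalan_poly n (cos x ^ 2)).
Proof.
assert (E : forall k, Derive (wallis_prim k) x = (cos x ^ 2) ^ k)
  by (intro; apply is_derive_unique, is_derive_wallis_prim).
unfold catalan_prim, catalan_poly; auto_derive.
- repeat split; eexists; apply is_derive_wallis_prim.
- change (fun y => wallis_prim ?k y) with (wallis_prim k); rewrite !E, !pow_add; ring.
Qed.

Lemma catalan_prim_PI2 n :
  catalan_prim n (PI / 2) = PI * (INR n - 1) / (4 ^ (n + 1) * (INR n + 2)) * catalan n.
Proof.
unfold catalan_prim, catalan.
replace (n + 2)%nat with (S (S n)) by lia; replace (n + 1)%nat with (S n) by lia.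
rewrite !wallis_prim_S_PI2, wallis_prim_PI2, S_INR; simpl pow.
pose proof (pos_INR n); assert (4 ^ n <> 0) by (apply pow_nonzero; lra).
field; repeat split; lra.
Qed.

Lemma integrand_eq n t : (1 <= n)%nat ->
  integrand n t = 2 * 4 ^ (n + 1) * sym_integrand (catalan_poly n) t.
Proof.
intro hn; destruct n as [|m]; [lia |].
set (r := sqrt (1 + (2 * t) ^ 2)).
assert (Hr : r * r = 1 + (2 * t) ^ 2) by (apply sqrt_sqrt; nra).
assert (Hrp : 0 < r) by (apply sqrt_lt_R0; nra).
assert (Hs : sqrt (t ^ 2 + / 4) = r / 2).
{ apply sqrt_lem_1; [nra | lra |].
  replace (r / 2 * (r / 2)) with (r * r / 4) by field; rewrite Hr; field. }
assert (Hp : Rpower (t ^ 2 + / 4) (5 / 2) = (t ^ 2 + / 4) ^ 2 * (r / 2)).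
{ replace (5 / 2) with (INR 2 + / 2) by (simpl; field).
  rewrite Rpower_plus, Rpower_pow, Rpower_sqrt, Hs by nra; reflexivity. }
unfold integrand, sym_integrand, subst_angle, catalan_poly.
rewrite cos_half_atan_sqr, sin_half_atan_sqr, Hs, Hp; fold r.
replace (S m - 1)%nat with m by lia.
replace (2 + / (r / 2)) with (2 * (1 + / r)) by (field; lra).
replace (2 - / (r / 2)) with (2 * (1 - / r)) by (field; lra).
replace (1 + (2 * t) ^ 2) with (r * r) by (rewrite Hr; ring).
replace (t ^ 2) with ((r * r - 1) / 4) by (rewrite Hr; field).
replace (S m + 1)%nat with (S (S m)) by lia.
rewrite <- !tech_pow_Rmult.
unfold Rdiv; rewrite !Rpow_mult_distr, pow_inv.
replace 4 with (2 * 2) by ring; rewrite !Rpow_mult_distr.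
assert (2 ^ m <> 0) by (apply pow_nonzero; lra).
field; repeat split; [lra | easy | rewrite Hr; nra].
Qed.

Theorem mainTheorem2 (n : nat) (hn : (2 <= n)%nat) :
  exists I : R,
    is_RInt_gen (integrand n) (at_point 0) (Rbar_locally p_infty) I /\
    catalan n = (INR n + 2) / (2 * (INR n - 1) * PI) * I.
Proof.
set (k := 2 * 4 ^ (n + 1)).
exists (k * (catalan_prim n (PI / 2) - catalan_prim n 0)); split.
- apply (is_RInt_gen_ext (fun t => scal k (sym_integrand (catalan_poly n) t))).
  + apply filter_forall; intros ab t _; symmetry; apply integrand_eq; lia.
  + apply (is_RInt_gen_scal (sym_integrand (catalan_poly n)) k).
    apply is_RInt_gen_sym_integrand; [apply is_derive_catalan_prim |].
    intro X; apply (ex_derive_continuous (catalan_poly n)).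
    unfold catalan_poly; auto_derive; easy.
- assert (H1 : 1 < INR n) by (apply lt_1_INR; lia).
  assert (4 ^ (n + 1) <> 0) by (apply pow_nonzero; lra).
  pose proof PI_RGT_0.
  unfold k; rewrite catalan_prim_PI2; unfold catalan_prim; rewrite !wallis_prim_0.
  field; repeat split; lra.
Qed.
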